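(* Let $\mathcal{A}=\mathcal{A}(R,\boldsymbol{\sigma},\boldsymbol{t})$ be a twisted generalized Weyl algebra with $R$ commutative, and let $M$ be a simple weight $\mathcal{A}$-module. Then $M$ has no inner breaks if and only if for every $\mathfrak{m}\in\mathrm{Supp}(M)$ and every homogeneous element $a\in\mathcal{A}$ (with respect to the $\mathbb{Z}^n$-gradation) with $aM_\mathfrak{m}\neq0$ we have $a^\ast a\notin\mathfrak{m}$.
   Context: Setup: $\Bbbk$ a field, $R$ a commutative unital $\Bbbk$-algebra, $\sigma_1^{1/2},\dots,\sigma_n^{1/2}$ commuting automorphisms ($\sigma_i=(\sigma_i^{1/2})^2$), $t_1,\dots,t_n\in R$ regular satisfying the consistency equations $\sigma_j^{1/2}(t_i)\sigma_i^{1/2}(t_j)=\sigma_j^{-1/2}(t_i)\sigma_i^{-1/2}(t_j)$ ($i\ne j$), $\sigma_i^{1/2}\sigma_j^{1/2}(t_k)\sigma_i^{-1/2}\sigma_j^{-1/2}(t_k)=\sigma_i^{1/2}\sigma_j^{-1/2}(t_k)\sigma_i^{-1/2}\sigma_j^{1/2}(t_k)$ ($i,j,k$ distinct). $\tilde{\mathcal{A}}$ is obtained from $R$ by adjoining $X_i^\pm$ with $X_i^\pm r=\sigma_i^{\pm1}(r)X_i^\pm$, $X_i^\pm X_i^\mp=\sigma_i^{\pm1/2}(t_i)$, $[X_i^\pm,X_j^\mp]=0$ ($i\ne j$), $\mathbb{Z}^n$-graded with $\deg R=0$, $\deg X_i^\pm=\pm\mathbf{e}_i$; $\mathcal{A}$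 is $\tilde{\mathcal{A}}$ modulo the sum of graded ideals meeting the degree-zero part trivially, with $\mathcal{A}_0=R$. $\ast$ is the anti-involution with $r^\ast=r$, $(X_i^\pm)^\ast=X_i^\mp$. A weight module is $M=\bigoplus_{\mathfrak{m}\in\mathrm{Specm}(R)}M_\mathfrak{m}$ with $M_\mathfrak{m}=\{v:\mathfrak{m}v=0\}$; $\mathrm{Supp}(M)=\{\mathfrak{m}:M_\mathfrak{m}\ne0\}$. A simple weight module $M$ has no inner breaks if for every $\mathfrak{m}\in\mathrm{Supp}(M)$ and every monomial $a=rX_{i_1}^{\varepsilon_1}\cdots X_{i_k}^{\varepsilon_k}$ ($r\in R$) with $aM_\mathfrak{m}\ne0$ one has $a^\ast a\notin\mathfrak{m}$. *)

From HB Require Import structures.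
From Stdlib Require List.
From mathcomp Require Import all_boot all_order all_algebra.
Set Implicit Arguments. Unset Strict Implicit. Unset Printing Implicit Defensive.
Import Order.TTheory GRing.Theory Num.Theory.
Local Open Scope ring_scope.

(* sh i = sigma_i^{1/2}, shi i = sigma_i^{-1/2}                        *)

Definition is_kalg_aut (k : fieldType) (R : comAlgType k) (f g : R -> R) : Prop :=
  [/\ (forall x y, f (x + y) = f x + f y),
      (forall x y, f (x * y) = f x * f y),
      f 1 = 1,
      (forall (c : k) x, f (c *: x) = c *: f x) &
      (cancel f g /\ cancel g f)].

Definition sigma_ (R : Type) (sh : R -> R) := fun r => sh (sh r).

Definition TGWA_data (k : fieldType) (R : comAlgType k) (n : nat)
    (sh shi : 'I_n -> R -> R) (t : 'I_n -> R) : Prop :=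
  [/\ (forall i, is_kalg_aut (sh i) (shi i)),
      (forall i j r, sh i (sh j r) = sh j (sh i r)),
      (forall i, GRing.lreg (t i)),
      (forall i j : 'I_n, i != j ->
          sh j (t i) * sh i (t j) = shi j (t i) * shi i (t j)) &
      (forall i j l : 'I_n, i != j -> j != l -> i != l ->
          sh i (sh j (t l)) * shi i (shi j (t l))
          = sh i (shi j (t l)) * shi i (sh j (t l)))].

(* A word is a sequence of letters (i, true) = X_i^+, (i, false) = X_i^- *)

Definition letter (A : nzRingType) (n : nat) (Xp Xm : 'I_n -> A)
    (p : 'I_n * bool) : A := if p.2 then Xp p.1 else Xm p.1.

Definition mono (A : nzRingType) (n : nat) (Xp Xm : 'I_n -> A)
    (w : seq ('I_n * bool)) : A := \prod_(p <- w) letter Xp Xm p.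

Definition degw (n : nat) (w : seq ('I_n * bool)) : {ffun 'I_n -> int} :=
  [ffun i => (count (pred1 (i, true)) w)%:Z - (count (pred1 (i, false)) w)%:Z].

(* a is homogeneous of degree g: a is an R-linear combination
   sum_j r_j X_{w_j} of monomials of degree g (this is the component A_g
   of the gradation induced by deg R = 0, deg X_i^{+-} = +- e_i) *)
Definition homog (R : comNzRingType) (A : nzRingType) (n : nat)
    (iota : R -> A) (Xp Xm : 'I_n -> A) (g : {ffun 'I_n -> int}) (a : A) : Prop :=
  exists s : seq (R * seq ('I_n * bool)),
    (forall p, List.In p s -> degw p.2 = g) /\
    a = \sum_(p <- s) iota p.1 * mono Xp Xm p.2.

Definition is_ideal2 (A : nzRingType) (J : A -> Prop) : Prop :=
  [/\ J 0, (forall x y, J x -> J y -> J (x - y)) &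
      (forall a x, J x -> J (a * x) /\ J (x * a))].

Definition graded_set (R : comNzRingType) (A : nzRingType) (n : nat)
    (iota : R -> A) (Xp Xm : 'I_n -> A) (J : A -> Prop) : Prop :=
  forall s : seq ({ffun 'I_n -> int} * A),
    uniq (map fst s) ->
    (forall p, List.In p s -> homog iota Xp Xm p.1 p.2) ->
    J (\sum_(p <- s) p.2) -> forall p, List.In p s -> J p.2.

(* A (with iota : R -> A and generators Xp, Xm) is the twisted generalized
   Weyl algebra A(R, sigma, t), characterized up to isomorphism:
   - iota is an injective ring morphism, and the defining relations hold;
   - A is spanned by the R-monomials (i.e. generated by R and the X_i^{+-});
   - the induced Z^n-gradation is a direct sum decomposition;
   - A_0 = R;
   - every graded two-sided ideal meeting A_0 = R trivially is zero
     (i.e. the maximal such ideal of the algebra ~A has been factored out). *)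
Definition is_TGWA (k : fieldType) (R : comAlgType k) (n : nat)
    (sh shi : 'I_n -> R -> R) (t : 'I_n -> R)
    (A : nzRingType) (iota : R -> A) (Xp Xm : 'I_n -> A) : Prop :=
  [/\ [/\ (forall x y, iota (x + y) = iota x + iota y),
          (forall x y, iota (x * y) = iota x * iota y),
          iota 1 = 1 & injective iota],
      [/\ (forall i r, Xp i * iota r = iota (sigma_ (sh i) r) * Xp i),
          (forall i r, Xm i * iota r = iota (sigma_ (shi i) r) * Xm i),
          (forall i, Xp i * Xm i = iota (sh i (t i))),
          (forall i, Xm i * Xp i = iota (shi i (t i))) &
          (forall i j, i != j -> Xp i * Xm j = Xm j * Xp i) /\
          (forall i j, i != j -> Xm i * Xp j = Xp j * Xm i)],
      (forall a : A, exists s : seq (R * seq ('I_n * bool)),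
          a = \sum_(p <- s) iota p.1 * mono Xp Xm p.2) /\
      (forall s : seq ({ffun 'I_n -> int} * A),
          uniq (map fst s) ->
          (forall p, List.In p s -> homog iota Xp Xm p.1 p.2) ->
          \sum_(p <- s) p.2 = 0 -> forall p, List.In p s -> p.2 = 0),
      (forall a, homog iota Xp Xm 0 a -> exists r, a = iota r) &
      (forall J : A -> Prop, is_ideal2 J -> graded_set iota Xp Xm J ->
          (forall r, J (iota r) -> iota r = 0) -> forall a, J a -> a = 0)].

Definition is_star (R : comNzRingType) (A : nzRingType) (n : nat)
    (iota : R -> A) (Xp Xm : 'I_n -> A) (star : A -> A) : Prop :=
  [/\ (forall a b, star (a + b) = star a + star b),
      (forall a b, star (a * b) = star b * star a),
      (forall a, star (star a) = a),
      (forall r, star (iota r) = iota r) &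
      (forall i, star (Xp i) = Xm i) /\
      (forall i, star (Xm i) = Xp i)].

Definition is_ideal1 (R : comNzRingType) (m : R -> Prop) : Prop :=
  [/\ m 0, (forall x y, m x -> m y -> m (x - y)) & (forall r x, m x -> m (r * x))].

Definition is_max_ideal (R : comNzRingType) (m : R -> Prop) : Prop :=
  [/\ is_ideal1 m, ~ m 1 &
      (forall J, is_ideal1 J -> (forall x, m x -> J x) ->
          J 1 \/ (forall x, J x -> m x))].

Definition weight_vec (R : comNzRingType) (A : nzRingType) (iota : R -> A)
    (M : lmodType A) (m : R -> Prop) (v : M) : Prop :=
  forall r, m r -> iota r *: v = 0.

Definition is_weight_module (R : comNzRingType) (A : nzRingType)
    (iota : R -> A) (M : lmodType A) : Prop :=
  forall v : M, exists s : seq ((R -> Prop) * M),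
    (forall p, List.In p s -> is_max_ideal p.1 /\ weight_vec iota p.1 p.2) /\
    v = \sum_(p <- s) p.2.

Definition in_supp (R : comNzRingType) (A : nzRingType) (iota : R -> A)
    (M : lmodType A) (m : R -> Prop) : Prop :=
  is_max_ideal m /\ exists v : M, weight_vec iota m v /\ v != 0.

Definition is_submodule (A : nzRingType) (M : lmodType A) (S : M -> Prop) : Prop :=
  [/\ S 0, (forall u v, S u -> S v -> S (u + v)) & (forall a v, S v -> S (a *: v))].

Definition is_simple (A : nzRingType) (M : lmodType A) : Prop :=
  (exists v : M, v != 0) /\
  forall S : M -> Prop, is_submodule S -> (forall v, S v -> v = 0) \/ (forall v, S v).

Definition acts_nonzero (R : comNzRingType) (A : nzRingType) (iota : R -> A)
    (M : lmodType A) (a : A) (m : R -> Prop) : Prop :=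
  exists v : M, weight_vec iota m v /\ a *: v != 0.

(* x \notin m, where x \in A_0 = R is identified with an element of R *)
Definition notin_ideal (R : comNzRingType) (A : nzRingType) (iota : R -> A)
    (m : R -> Prop) (x : A) : Prop :=
  ~ (exists r, m r /\ iota r = x).

Definition no_inner_breaks (R : comNzRingType) (A : nzRingType) (n : nat)
    (iota : R -> A) (Xp Xm : 'I_n -> A) (star : A -> A) (M : lmodType A) : Prop :=
  forall m, in_supp iota M m ->
  forall (r : R) (w : seq ('I_n * bool)),
    acts_nonzero iota M (iota r * mono Xp Xm w) m ->
    notin_ideal iota m (star (iota r * mono Xp Xm w) * (iota r * mono Xp Xm w)).

(* Only the forward implication needs an argument.  Let a be homogeneous of
   degree g with a v <> 0 for some v in M_m, and suppose a* a in m.  Some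
   monomial summand b of a still acts nontrivially on v, so P := b* b is not
   in m by hypothesis; as P is invertible modulo m, v = P u for a weight
   vector u of the same weight.  The products a b* and a* b have degree 0,
   hence are elements F and G of R.  Then 0 = a* a v = a* F b u = G^2 u
   forces G in m, and so 0 = b* a v = b* F b u = P F' u, where F b = b F'
   because monomials normalize R.  Hence F' u = 0 and
   a v = F b u = b F' u = 0. *)
From Stdlib Require List.
From Stdlib Require Import Classical.
From HB Require Import structures.
From mathcomp Require Import all_boot all_order all_algebra.
From mathcomp Require Import zify.
Set Implicit Arguments. Unset Strict Implicit. Unset Printing Implicit Defensive.
Import Order.TTheory GRing.Theory Num.Theory.
Local Open Scope ring_scope.

Definition flip_letter (n : nat) (x : 'I_n * bool) := (x.1, ~~ x.2).

Lemma degw_nil (n : nat) : degw ([::] : seq ('I_n * bool)) = 0.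
Proof. by apply/ffunP => i; rewrite !ffunE. Qed.

Lemma degw_cat (n : nat) (u v : seq ('I_n * bool)) :
  degw (u ++ v) = degw u + degw v.
Proof. by apply/ffunP => i; rewrite !ffunE !count_cat !PoszD addrACA opprD. Qed.

Lemma degw_flip_letter (n : nat) (x : 'I_n * bool) :
  degw [:: flip_letter x] = - degw [:: x].
Proof.
apply/ffunP => i; rewrite !ffunE /=; case: x => j [] /=;
by rewrite !xpair_eqE /=; case: (j == i) => /=; lia.
Qed.

Lemma TGWA_letter_normalR (R : comNzRingType) (A : nzRingType) (n : nat)
    (sh shi : 'I_n -> R -> R) (iota : R -> A) (Xp Xm : 'I_n -> A) :
  (forall i r, Xp i * iota r = iota (sigma_ (sh i) r) * Xp i) ->
  (forall i r, Xm i * iota r = iota (sigma_ (shi i) r) * Xm i) ->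
  forall x r, exists r', letter Xp Xm x * iota r = iota r' * letter Xp Xm x.
Proof. by move=> XpR XmR [i []] r; eexists; [apply: XpR | apply: XmR]. Qed.

Lemma TGWA_letter_normalL (R : comNzRingType) (A : nzRingType) (n : nat)
    (sh shi : 'I_n -> R -> R) (iota : R -> A) (Xp Xm : 'I_n -> A) :
  (forall i, cancel (sh i) (shi i) /\ cancel (shi i) (sh i)) ->
  (forall i r, Xp i * iota r = iota (sigma_ (sh i) r) * Xp i) ->
  (forall i r, Xm i * iota r = iota (sigma_ (shi i) r) * Xm i) ->
  forall x r, exists r', iota r * letter Xp Xm x = letter Xp Xm x * iota r'.
Proof.
move=> shK XpR XmR [i []] r; rewrite /letter /=.
- by exists (sigma_ (shi i) r); rewrite XpR /sigma_ !(proj2 (shK i)).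
- by exists (sigma_ (sh i) r); rewrite XmR /sigma_ !(proj1 (shK i)).
Qed.

Lemma max_ideal_inv (R : comNzRingType) (m : R -> Prop) x :
  is_max_ideal m -> ~ m x -> exists z, m (z * x - 1).
Proof.
case=> [[m0 mB mM] m1 mmax] nx.
pose J y := exists u z, m u /\ y = u + z * x.
have J_ideal : is_ideal1 J.
  split.
  - by exists 0, 0; rewrite mul0r addr0.
  - move=> _ _ [u1 [z1 [Hu1 ->]]] [u2 [z2 [Hu2 ->]]]; exists (u1 - u2), (z1 - z2).
    by split; [exact: mB | rewrite mulrBl opprD addrACA].
  - move=> r _ [u [z [Hu ->]]]; exists (r * u), (r * z).
    by split; [exact: mM | rewrite mulrDr mulrA].
case: (mmax J J_ideal) => [y my | [u [z [Hu E]]] | Jm].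
- by exists y, 0; rewrite mul0r addr0.
- exists z; have -> : z * x - 1 = 0 - u by rewrite E opprD addrCA subrr addr0 sub0r.
  exact: mB.
- by exfalso; apply: nx; apply: Jm; exists 0, 1; rewrite mul1r add0r.
Qed.

Definition no_homog_inner_breaks (R : comNzRingType) (A : nzRingType) (n : nat)
    (iota : R -> A) (Xp Xm : 'I_n -> A) (star : A -> A) (M : lmodType A) : Prop :=
  forall m, in_supp iota M m -> forall g a, homog iota Xp Xm g a ->
    acts_nonzero iota M a m -> notin_ideal iota m (star a * a).

Section NormalizingGenerators.
Variables (R : comNzRingType) (A : nzRingType) (n : nat) (iota : R -> A)
  (Xp Xm : 'I_n -> A) (star : A -> A).
Hypothesis iotaD : forall x y, iota (x + y) = iota x + iota y.
Hypothesis iotaM : forall x y, iota (x * y) = iota x * iota y.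
Hypothesis iota1 : iota 1 = 1.
Hypothesis letter_normalR :
  forall x r, exists r', letter Xp Xm x * iota r = iota r' * letter Xp Xm x.
Hypothesis letter_normalL :
  forall x r, exists r', iota r * letter Xp Xm x = letter Xp Xm x * iota r'.
Hypothesis starD : forall a b, star (a + b) = star a + star b.
Hypothesis starM : forall a b, star (a * b) = star b * star a.
Hypothesis starK : involutive star.
Hypothesis starI : forall r, star (iota r) = iota r.
Hypothesis starXp : forall i, star (Xp i) = Xm i.
Hypothesis starXm : forall i, star (Xm i) = Xp i.
Hypothesis homog0_iota : forall a, homog iota Xp Xm 0 a -> exists r, a = iota r.

Local Notation mono := (mono Xp Xm).
Local Notation homog := (homog iota Xp Xm).

Lemma iotaC x y : iota x * iota y = iota y * iota x.
Proof. by rewrite -!iotaM mulrC. Qed.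

Lemma star0 : star 0 = 0.
Proof. by apply: (addrI (star 0)); rewrite -starD !addr0. Qed.

Lemma mono_nil : mono [::] = 1.
Proof. exact: big_nil. Qed.

Lemma mono_cons x w : mono (x :: w) = letter Xp Xm x * mono w.
Proof. exact: big_cons. Qed.

Lemma mono_cat u v : mono (u ++ v) = mono u * mono v.
Proof.
elim: u => [|x u IH] /=; first by rewrite mono_nil mul1r.
by rewrite !mono_cons IH mulrA.
Qed.

Lemma mono_normalR w r : exists r', mono w * iota r = iota r' * mono w.
Proof.
elim: w r => [|x w IH] r; first by exists r; rewrite mono_nil mulr1 mul1r.
have [r1 E1] := IH r; have [r2 E2] := letter_normalR x r1.
by exists r2; rewrite mono_cons -mulrA E1 !mulrA E2.
Qed.

Lemma mono_normalL w r : exists r', iota r * mono w = mono w * iota r'.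
Proof.
elim: w r => [|x w IH] r; first by exists r; rewrite mono_nil mulr1 mul1r.
have [r1 E1] := letter_normalL x r; have [r2 E2] := IH r1.
by exists r2; rewrite mono_cons mulrA E1 -!mulrA E2.
Qed.

Lemma homog0 g : homog g 0.
Proof. by exists [::]; split => //; rewrite big_nil. Qed.

Lemma homogD g a c : homog g a -> homog g c -> homog g (a + c).
Proof.
move=> [s [Hs Ea]] [s' [Hs' Ec]]; rewrite Ea Ec; exists (s ++ s'); split.
  by move=> p Hp; case: (List.in_app_or _ _ _ Hp) => [/Hs | /Hs'].
by rewrite big_cat.
Qed.

Lemma homog_term r w : homog (degw w) (iota r * mono w).
Proof.
exists [:: (r, w)]; split; last by rewrite big_cons big_nil addr0.
by move=> p [<- | []].
Qed.

Lemma homog_mono w : homog (degw w) (mono w).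
Proof. by rewrite -[mono w]mul1r -iota1; apply: homog_term. Qed.

Lemma homog_ind g (P : A -> Prop) :
  P 0 -> (forall a c, P a -> P c -> P (a + c)) ->
  (forall r w, degw w = g -> P (iota r * mono w)) ->
  forall a, homog g a -> P a.
Proof.
move=> P0 PD Pt a [s [Hs Ea]]; rewrite {a}Ea; elim: s Hs => [|p s IH] Hs; first by rewrite big_nil.
rewrite big_cons; apply: PD; first by apply: Pt; apply: Hs; left.
by apply: IH => q Hq; apply: Hs; right.
Qed.

Lemma homogM g h a c : homog g a -> homog h c -> homog (g + h) (a * c).
Proof.
move=> Ha Hc; move: a Ha; apply: homog_ind => [|a1 a2 H1 H2|r w <-].
- by rewrite mul0r; apply: homog0.
- by rewrite mulrDl; apply: homogD.
move: c Hc; apply: homog_ind => [|c1 c2 H1 H2|r' w' <-].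
- by rewrite mulr0; apply: homog0.
- by rewrite mulrDr; apply: homogD.
have [r'' E] := mono_normalR w r'.
rewrite -mulrA (mulrA (mono w)) E -!mulrA mulrA -iotaM -mono_cat -degw_cat.
exact: homog_term.
Qed.

Lemma star_letter x : star (letter Xp Xm x) = letter Xp Xm (flip_letter x).
Proof. by case: x => i []; rewrite /letter /=. Qed.

Lemma homog_star_mono w : homog (- degw w) (star (mono w)).
Proof.
elim: w => [|x w IH].
  rewrite mono_nil -iota1 starI iota1 -mono_nil degw_nil oppr0 -(degw_nil n).
  exact: homog_mono.
rewrite mono_cons starM star_letter -(cat1s x) degw_cat opprD addrC.
rewrite -degw_flip_letter -[letter _ _ _]mulr1 -mono_nil -mono_cons.
exact: homogM IH (homog_mono _).
Qed.

Lemma homog_star g a : homog g a -> homog (- g) (star a).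
Proof.
move: a; apply: homog_ind => [|a c Ha Hc|r w <-].
- by rewrite star0; apply: homog0.
- by rewrite starD; apply: homogD.
rewrite starM starI -[- degw w]addr0 -(degw_nil n) -[iota r]mulr1 -mono_nil.
exact: homogM (homog_star_mono w) (homog_term r [::]).
Qed.

Lemma homog_star_mul g a c : homog g a -> homog g c -> exists r, star a * c = iota r.
Proof.
move=> Ha Hc; apply: homog0_iota; rewrite -(addNr g).
exact: homogM (homog_star Ha) Hc.
Qed.

Lemma homog_mul_star g a c : homog g a -> homog g c -> exists r, a * star c = iota r.
Proof.
move=> Ha Hc; apply: homog0_iota; rewrite -(subrr g).
exact: homogM Ha (homog_star Hc).
Qed.

Lemma homog_summand_scale_neq0 (M : lmodType A) g a (v : M) :
  homog g a -> a *: v != 0 ->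
  exists r w, degw w = g /\ (iota r * mono w) *: v != 0.
Proof.
move: a; apply: homog_ind => [|a c IHa IHc|r w Ew]; first by rewrite scale0r eqxx.
- rewrite scalerDl; have [/eqP -> | /IHa //] := boolP (a *: v == 0).
  by rewrite add0r => /IHc.
- by exists r, w.
Qed.

Section WeightVectors.
Variables (M : lmodType A) (m : R -> Prop).
Hypothesis m_max : is_max_ideal m.

Lemma weight_vec_scale x (u : M) :
  weight_vec iota m u -> weight_vec iota m (iota x *: u).
Proof. by move=> Hu r mr; rewrite scalerA iotaC -scalerA Hu // scaler0. Qed.

Lemma weight_vec_unit x : ~ m x ->
  exists z, forall u : M, weight_vec iota m u -> iota x *: (iota z *: u) = u.
Proof.
move=> /(max_ideal_inv m_max) [z mz]; exists z => u Hu.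
have E : iota x * iota z = iota (z * x - 1) + 1 by rewrite -iota1 -iotaD subrK iotaM iotaC.
by rewrite scalerA E scalerDl Hu // add0r scale1r.
Qed.

Lemma weight_vec_scale_eq0 x (u : M) :
  ~ m x -> weight_vec iota m u -> iota x *: u = 0 -> u = 0.
Proof.
move=> /weight_vec_unit [z zK] Hu E.
by rewrite -(zK u Hu) scalerA iotaC -scalerA E scaler0.
Qed.

Lemma weight_vec_sq_ann_mem x (u : M) :
  weight_vec iota m u -> u != 0 -> iota x *: (iota x *: u) = 0 -> m x.
Proof.
move=> Hu u0 E; apply: NNPP => nx; move/eqP: u0; apply.
by apply: (weight_vec_scale_eq0 nx Hu); apply: (weight_vec_scale_eq0 nx (weight_vec_scale x Hu)).
Qed.

Lemma mem_star_mul_scale_eq0 (a b : A) (P F G r0 : R) (v : M) :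
  weight_vec iota m v ->
  star b * b = iota P -> ~ m P ->
  a * star b = iota F -> star a * b = iota G ->
  (forall r, exists r', iota r * b = b * iota r') ->
  star a * a = iota r0 -> m r0 ->
  a *: v = 0.
Proof.
move=> Hv PE nP FE GE b_normal r0E mr0.
have [z zK] := weight_vec_unit nP.
set u := iota z *: v; have Hu : weight_vec iota m u by apply: weight_vec_scale.
have av : a *: v = (iota F * b) *: u by rewrite -(zK v Hv) scalerA -PE mulrA FE.
have [u0 | u0] := eqVneq u 0; first by rewrite av u0 scaler0.
have FE' : iota F = b * star a by rewrite -starI -FE starM starK.
have GE' : iota G = star b * a by rewrite -starI -GE starM starK.
have mG : m G.
  apply: (weight_vec_sq_ann_mem Hu u0).
  suff <- : (star a * a) *: v = iota G *: (iota G *: u) by rewrite r0E Hv.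
  by rewrite -scalerA av scalerA FE' !mulrA GE -mulrA GE scalerA.
have [F' F'E] := b_normal F.
have : iota P *: (iota F' *: u) = 0.
  suff <- : (star b * a) *: v = iota P *: (iota F' *: u) by rewrite -GE' Hv.
  by rewrite -scalerA av scalerA F'E mulrA PE scalerA.
move/(weight_vec_scale_eq0 nP (weight_vec_scale F' Hu)) => F'u.
by rewrite av F'E -scalerA F'u scaler0.
Qed.

End WeightVectors.

Lemma no_homog_inner_breaks_of_monomials (M : lmodType A) :
  no_inner_breaks iota Xp Xm star M -> no_homog_inner_breaks iota Xp Xm star M.
Proof.
move=> NIB m Hm g a Ha [v [Hv av]] [r0 [mr0 r0E]].
have [r [w [Ew bv]]] := homog_summand_scale_neq0 Ha av.
set b := iota r * mono w in bv.
have Hb : homog g b by rewrite -Ew; apply: homog_term.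
have [P PE] := homog_star_mul Hb Hb.
have [F FE] := homog_mul_star Ha Hb.
have [G GE] := homog_star_mul Ha Hb.
have nP : ~ m P.
  by move=> mP; apply: (NIB m Hm r w); [exists v | exists P].
have b_normal r' : exists r'', iota r' * b = b * iota r''.
  have [r'' E] := mono_normalL w r'.
  by exists r''; rewrite mulrA iotaC -mulrA E mulrA.
move/eqP: av; apply.
exact: (mem_star_mul_scale_eq0 Hm.1 Hv PE nP FE GE b_normal (esym r0E) mr0).
Qed.

Lemma no_inner_breaks_of_homog (M : lmodType A) :
  no_homog_inner_breaks iota Xp Xm star M -> no_inner_breaks iota Xp Xm star M.
Proof. by move=> H m Hm r w; apply: H Hm (degw w) _ (homog_term r w). Qed.

End NormalizingGenerators.

Theorem mainTheorem12 (k : fieldType) (R : comAlgType k) (n : nat)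
    (sh shi : 'I_n -> R -> R) (t : 'I_n -> R)
    (A : nzRingType) (iota : R -> A) (Xp Xm : 'I_n -> A) (star : A -> A)
    (M : lmodType A) :
  TGWA_data sh shi t ->
  is_TGWA sh shi t iota Xp Xm ->
  is_star iota Xp Xm star ->
  is_weight_module iota M ->
  is_simple M ->
  (no_inner_breaks iota Xp Xm star M <->
   forall m : R -> Prop, in_supp iota M m ->
   forall (g : {ffun 'I_n -> int}) (a : A), homog iota Xp Xm g a ->
     acts_nonzero iota M a m -> notin_ideal iota m (star a * a)).
Proof.
move=> [sh_aut _ _ _ _] [[iotaD iotaM iota1 _] [XpR XmR _ _ _] _ A0 _].
move=> [starD starM starK starI [starXp starXm]] _ _.
have shK i : cancel (sh i) (shi i) /\ cancel (shi i) (sh i) by case: (sh_aut i).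
split; last exact: no_inner_breaks_of_homog.
exact: (no_homog_inner_breaks_of_monomials iotaD iotaM iota1 (TGWA_letter_normalR XpR XmR)
  (TGWA_letter_normalL shK XpR XmR) starD starM starK starI starXp starXm A0).
Qed.
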